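(* Let $C$ be a linear code of length $n$ over $R$. Then \[ SLWE_{C^\perp}(X_0,X_1,\dots,X_{16})=\frac{1}{|C|}\,SLWE_C(B_0,B_1,\dots,B_{16}), \] where for $0\le k\le 16$, $B_k=\sum_{j=0}^{16}K_j(k)X_j$ and $K_j(k)$ is the coefficient of $Y^j$ in $(1+Y)^{16-k}(1-Y)^k$. (For instance $B_0=\sum_{j}\binom{16}{j}X_j$, $B_8=X_0-8X_2+28X_4-56X_6+70X_8-56X_{10}+28X_{12}-8X_{14}+X_{16}$, $B_{16}=\sum_j(-1)^j\binom{16}{j}X_j$.)
   Context: $R=\mathbb{Z}_4[u,v,w]/\langle u^2-u,v^2-v,w^2-w\rangle$. With $\eta_1=(1-u)(1-v)(1-w)$, $\eta_2=u(1-v)(1-w)$, $\eta_3=(1-u)v(1-w)$, $\eta_4=(1-u)(1-v)w$, $\eta_5=uv(1-w)$, $\eta_6=u(1-v)w$, $\eta_7=(1-u)vw$, $\eta_8=uvw$, every $r\in R$ is uniquely $r=\sum_{i=1}^8 r_i\eta_i$ with $r_i\in\mathbb{Z}_4$ (explicitly, for $r=a+bu+cv+dw+euv+fuw+gvw+huvw$: $r_1=a$, $r_2=a+b$, $r_3=a+c$, $r_4=a+d$, $r_5=a+b+c+e$, $r_6=a+b+d+f$, $r_7=a+c+d+g$, $r_8=a+b+c+d+e+f+g+h$). The Lee weight on $\mathbb{Z}_4$ is $w_L(0)=0$, $w_L(1)=w_L(3)=1$, $w_L(2)=2$, and on $R$ it is $w_L(r)=\sum_{i=1}^8 w_L(r_i)\in\{0,\dots,16\}$.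 A linear code is an $R$-submodule of $R^n$, with dual $C^\perp$ taken w.r.t. $\langle\mathbf{x},\mathbf{y}\rangle=\sum_jx_jy_j$ in $R$. For $\mathbf{c}\in R^n$ and $0\le j\le 16$, $n_j(\mathbf{c})$ is the number of coordinates of $\mathbf{c}$ of Lee weight $j$, and $SLWE_C(X_0,\dots,X_{16})=\sum_{\mathbf{c}\in C}\prod_{j=0}^{16}X_j^{n_j(\mathbf{c})}$. *)

From HB Require Import structures.
From mathcomp Require Import all_boot all_order all_algebra.
Set Implicit Arguments. Unset Strict Implicit. Unset Printing Implicit Defensive.
Import Order.TTheory GRing.Theory Num.Theory.
Local Open Scope ring_scope.

(* The ring R = Z_4[u,v,w]/<u^2-u, v^2-v, w^2-w>.
   Every element is uniquely a + b u + c v + d w + e uv + f uw + g vw + h uvw,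
   i.e. a Z_4-linear combination of the square-free monomials x^S, S a subset
   of the variables {u,v,w} (indexed 0 = u, 1 = v, 2 = w).  We represent an
   element by its coefficient function S |-> coefficient of x^S.
   Multiplication follows from u^2 = u etc.: x^S * x^T = x^(S :|: T). *)
Definition R := {ffun {set 'I_3} -> 'Z_4}.

Definition rzero : R := [ffun _ => 0].
Definition radd (x y : R) : R := [ffun S => x S + y S].
Definition rmul (x y : R) : R :=
  [ffun U => \sum_(S : {set 'I_3}) \sum_(T : {set 'I_3} | (S :|: T) == U) x S * y T].

(* Component r_P of r in the idempotent basis eta: r = sum_P r_P eta_P, where
   P is the set of variables equal to 1 in the corresponding idempotent
   (eta_1 <-> P = {}, eta_2 <-> {u}, ..., eta_8 <-> {u,v,w}). *)
Definition rcomp (r : R) (P : {set 'I_3}) : 'Z_4 :=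
  \sum_(S : {set 'I_3} | S \subset P) r S.

Definition leeZ4 (x : 'Z_4) : nat :=
  match val x with 0 => 0 | 1 => 1 | 2 => 2 | _ => 1 end%N.

Definition leeR (r : R) : nat := (\sum_(P : {set 'I_3}) leeZ4 (rcomp r P))%N.

Definition word (n : nat) := {ffun 'I_n -> R}.

Definition wzero (n : nat) : word n := [ffun _ => rzero].
Definition wadd (n : nat) (x y : word n) : word n := [ffun j => radd (x j) (y j)].
Definition wscale (n : nat) (r : R) (x : word n) : word n := [ffun j => rmul r (x j)].

Definition linear_code (n : nat) (C : {set word n}) : Prop :=
  [/\ wzero n \in C,
      (forall x y, x \in C -> y \in C -> wadd x y \in C) &
      (forall r x, x \in C -> wscale r x \in C)].

Definition ip (n : nat) (x y : word n) : R :=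
  \big[radd/rzero]_(j < n) rmul (x j) (y j).

Definition dual (n : nat) (C : {set word n}) : {set word n} :=
  [set y : word n | [forall x in C, ip x y == rzero]].

Definition nj (n : nat) (c : word n) (j : nat) : nat :=
  #|[set i : 'I_n | leeR (c i) == j]|.

Definition SLWE (F : fieldType) (n : nat) (C : {set word n}) (X : 'I_17 -> F) : F :=
  \sum_(c in C) \prod_(j < 17) X j ^+ nj c j.

Definition Kraw (j k : nat) : int :=
  (((1 + 'X) ^+ (16 - k) * (1 - 'X) ^+ k : {poly int})`_j).

Definition Bk (F : fieldType) (X : 'I_17 -> F) (k : 'I_17) : F :=
  \sum_(j < 17) (Kraw j k)%:~R * X j.

(* The component map r |-> (r_P)_P (P ranging over the eight
   subsets of {u,v,w}) is a ring isomorphism R ~ Z_4^8, so the Lee weight of r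
   is the sum of the Z_4 Lee weights of its components.  With the additive
   character chi(a) = i^a of Z_4 and the "trace" tr(r) = sum_P r_P, the map
   x |-> chi(tr <x,y>) is a character of the code C which is trivial exactly
   when y is in the dual code; hence its sum over C is |C| [y \in C^perp].
   On the other hand, for b in R, the generating polynomial
   sum_a chi(sum_P b_P a_P) Y^(w_L(a)) factors over the eight components as
   (1+Y)^(16-w_L(b)) (1-Y)^(w_L(b)), so its coefficients are the Krawtchouk
   numbers K_j(w_L(b)).  Expanding both enumerators along weight profiles
   g : 'I_n -> 'I_17 (the Lee weight of every coordinate), the theorem reduces
   to the counting identity
     sum_(x in C) prod_i K_(g i)(w_L(x_i)) = |C| * #{y in C^perp | profile y = g},
   which follows by combining the two facts above. *)

From HB Require Import structures.
From mathcomp Require Import all_boot all_order all_algebra all_field.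
From mathcomp Require Import ring.
Import Order.TTheory GRing.Theory Num.Theory.
Local Open Scope ring_scope.

Lemma rcomp0 P : rcomp rzero P = 0.
Proof. by rewrite /rcomp big1 // => S _; rewrite ffunE. Qed.

Lemma rcompD x y P : rcomp (radd x y) P = rcomp x P + rcomp y P.
Proof. by rewrite /rcomp -big_split; apply: eq_bigr => S _; rewrite ffunE. Qed.

(* x^S x^T = x^(S :|: T), and S :|: T lies below P iff both S and T do. *)
Lemma rcompM x y P : rcomp (rmul x y) P = rcomp x P * rcomp y P.
Proof.
rewrite /rcomp big_distrlr /=.
under eq_bigr => U _ do rewrite ffunE.
rewrite exchange_big /=.
transitivity (\sum_S \sum_(T | (S :|: T) \subset P) x S * y T).
  apply: eq_bigr => S _; symmetry.
  rewrite (partition_big (fun T => S :|: T) (fun U => U \subset P)) //=.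
  apply: eq_bigr => U UP; apply: eq_bigl => T.
  by case: eqP => [->|]; rewrite ?UP ?andbF.
rewrite [RHS]big_mkcond /=; apply: eq_bigr => S _.
under eq_bigl => T do rewrite subUset.
by case: (S \subset P); rewrite ?big_pred0_eq.
Qed.

Lemma rcomp_triangular r S :
  rcomp r S = r S + \sum_(T : {set 'I_3} | T \proper S) r T.
Proof.
rewrite /rcomp (bigD1 S) //=; congr (_ + _); apply: eq_bigl => T.
by rewrite properEneq andbC.
Qed.

Definition components (r : R) : R := [ffun P => rcomp r P].

Lemma components_inj : injective components.
Proof.
move=> r r' /ffunP eq_comp; apply/ffunP => S.
have [m] := ubnP #|S|; elim: m S => // m IH S; rewrite ltnS => leSm.
have := eq_comp S; rewrite !ffunE !rcomp_triangular.
rewrite (eq_bigr (fun T => r' T)) => [/addIr //|T ltTS].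
by apply: IH; apply: leq_trans (proper_card ltTS) leSm.
Qed.

Lemma component_selector P : exists s : R, forall Q, rcomp s Q = (Q == P)%:R.
Proof.
have [s _ sK] := injF_bij components_inj; exists (s [ffun Q => (Q == P)%:R]) => Q.
by have /ffunP/(_ Q) := sK [ffun Q => (Q == P)%:R]; rewrite !ffunE.
Qed.

Lemma leeZ4_le2 (t : 'Z_4) : (leeZ4 t <= 2)%N.
Proof. by rewrite /leeZ4; case: t => [[|[|[|[|m]]]] ?]. Qed.

Lemma card_subsets3 : #|{set 'I_3}| = 8%N.
Proof. by rewrite -cardsT -powersetT card_powerset cardsT card_ord. Qed.

Lemma leeR_le16 r : (leeR r <= 16)%N.
Proof.
rewrite /leeR; apply: (@leq_trans (\sum_(P : {set 'I_3}) 2)%N).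
  by apply: leq_sum => P _; apply: leeZ4_le2.
by rewrite sum_nat_const card_subsets3.
Qed.

Definition chi (a : 'Z_4) : algC := 'i ^+ val a.

(* i has multiplicative order exactly 4, since i^2 = -1 != 1. *)
Lemma i_prim4 : 4.-primitive_root ('i : algC).
Proof.
have i4 : ('i : algC) ^+ 4 = 1 by rewrite (exprM _ 2 2) sqrCi sqrrN expr1n.
have [m prim_m m_dvd4] := prim_order_exists (isT : (0 < 4)%N) i4.
have : ~~ (m %| 2)%N.
  rewrite (prim_order_dvd prim_m) sqrCi -subr_eq0 -opprD oppr_eq0.
  by rewrite -[1 + 1]/(2%:R) pnatr_eq0.
by case: m prim_m m_dvd4 => [|[|[|[|[|m]]]]].
Qed.

Lemma chiD a b : chi (a + b) = chi a * chi b.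
Proof. by rewrite /chi -exprD -[RHS](prim_expr_mod i_prim4). Qed.

Lemma chi_sum I (r : seq I) (F : I -> 'Z_4) :
  chi (\sum_(i <- r) F i) = \prod_(i <- r) chi (F i).
Proof. exact: (big_morph chi chiD). Qed.

(* chi is faithful: this is what makes the character sums detect duality. *)
Lemma chi_eq1 a : (chi a == 1) = (a == 0).
Proof. by rewrite /chi -(prim_order_dvd i_prim4); case: a => [[|[|[|[|m]]]] //]. Qed.

Lemma rcomp_ip n (x y : word n) P :
  rcomp (ip x y) P = \sum_(i < n) rcomp (x i) P * rcomp (y i) P.
Proof.
rewrite /ip (big_morph (rcomp^~ P) (fun x y => rcompD x y P) (rcomp0 P)).
by apply: eq_bigr => i _; rewrite rcompM.
Qed.

Definition tr (r : R) : 'Z_4 := \sum_(P : {set 'I_3}) rcomp r P.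

Definition cdot (a b : R) : 'Z_4 := \sum_(P : {set 'I_3}) rcomp a P * rcomp b P.

Lemma tr_ip n (x y : word n) : tr (ip x y) = \sum_(i < n) cdot (x i) (y i).
Proof. by rewrite /tr exchange_big /=; apply: eq_bigr => P _; rewrite rcomp_ip. Qed.

Lemma tr_ip_wadd n (x x' y : word n) :
  tr (ip (wadd x x') y) = tr (ip x y) + tr (ip x' y).
Proof.
rewrite !tr_ip -big_split; apply: eq_bigr => i _.
by rewrite /cdot -big_split; apply: eq_bigr => P _; rewrite ffunE rcompD mulrDl.
Qed.

Lemma tr_ip_wscale n s (x y : word n) : tr (ip (wscale s x) y) = cdot s (ip x y).
Proof.
apply: eq_bigr => P _; rewrite !rcomp_ip mulr_sumr.
by apply: eq_bigr => i _; rewrite ffunE rcompM mulrA.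
Qed.

Lemma wadd_injl n (z : word n) : injective (fun x : word n => wadd x z).
Proof.
move=> x x' /ffunP eq_xx'; apply/ffunP => j; apply/ffunP => S.
by have /ffunP/(_ S) := eq_xx' j; rewrite !ffunE => /addIr.
Qed.

Lemma twisted_sum_eq0 (T : finType) (K : idomainType) (A : {set T})
    (f : T -> K) (s : T -> T) (c : K) :
  injective s -> {in A, forall x, s x \in A} ->
  {in A, forall x, f (s x) = c * f x} -> c != 1 ->
  \sum_(x in A) f x = 0.
Proof.
move=> s_inj sA fs c_neq1.
have sA_eq : s @: A = A.
  apply/eqP; rewrite eqEcard card_imset // leqnn andbT.
  by apply/subsetP => _ /imsetP[x xA ->]; apply: sA.
have : \sum_(x in A) f x = c * \sum_(x in A) f x.
  rewrite -{1}sA_eq big_imset /=; last by move=> x x' _ _ /s_inj.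
  by rewrite mulr_sumr; apply: eq_bigr.
move/eqP; rewrite -subr_eq0 -{1}[\sum_(x in A) f x]mul1r -mulrBl mulf_eq0.
by rewrite subr_eq0 eq_sym (negbTE c_neq1) => /eqP.
Qed.

(* Orthogonality: if y is not in the dual code, some x0 in C has <x0,y> != 0,
   hence a nonzero component P; translating C by eta_P x0 then multiplies the
   character sum by chi(<x0,y>_P) != 1. *)
Lemma dual_char_sum n (C : {set word n}) (y : word n) : linear_code C ->
  \sum_(x in C) chi (tr (ip x y)) = if y \in dual C then #|C|%:R else 0.
Proof.
case=> _ Cadd Cscale; case: ifPn => [yD | yND].
  rewrite -sumr_const; apply: eq_bigr => x xC.
  move: yD; rewrite inE => /forallP/(_ x); rewrite xC => /eqP ->.
  by rewrite /tr big1 // => P _; rewrite rcomp0.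
have [x0 x0C ip_neq0] : exists2 x0, x0 \in C & ip x0 y != rzero.
  by move: yND; rewrite inE => /forallPn[x0]; rewrite negb_imply => /andP[]; exists x0.
have [P compP] : exists P, rcomp (ip x0 y) P != 0.
  apply/existsP; apply: contraR ip_neq0 => /existsPn comp0; apply/eqP/components_inj.
  by apply/ffunP => P; rewrite !ffunE rcomp0; apply/eqP/negPn/comp0.
have [s sP] := component_selector P.
pose x1 := wscale s x0.
have tr_x1 : tr (ip x1 y) = rcomp (ip x0 y) P.
  rewrite tr_ip_wscale /cdot (bigD1 P) //= big1 => [|Q QP].
    by rewrite sP eqxx mul1r addr0.
  by rewrite sP (negbTE QP) mul0r.
apply: (@twisted_sum_eq0 _ _ _ _ (fun x => wadd x x1) (chi (tr (ip x1 y)))).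
- exact: wadd_injl.
- by move=> x xC; apply: Cadd => //; apply: Cscale.
- by move=> x _; rewrite tr_ip_wadd chiD mulrC.
- by rewrite tr_x1 chi_eq1.
Qed.

Lemma kraw_Z4 (b : 'Z_4) :
  \sum_(t : 'Z_4) (chi (b * t))%:P * 'X^(leeZ4 t) =
  (1 + 'X) ^+ (2 - leeZ4 b) * (1 - 'X : {poly algC}) ^+ (leeZ4 b).
Proof.
have i3 : ('i : algC) ^+ 3 = - 'i by rewrite exprS sqrCi mulrN1.
have i4 : ('i : algC) ^+ 4 = 1 by apply: prim_expr_order i_prim4.
case: b => [[|[|[|[|m]]]] hb] //; rewrite !big_ord_recl big_ord0 /chi /leeZ4 /=.
all: rewrite /bump -?plusE -?multE /= !(prim_expr_mod i_prim4).
all: rewrite -?[_ ^+ 6]/(_ ^+ (2 + 4)) -?[_ ^+ 9]/(_ ^+ (1 + 4 + 4)) ?exprD ?i4 ?mulr1.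
all: rewrite ?expr0 ?expr1 ?sqrCi ?i3 ?polyCN ?polyC1 ?subn0 ?subnn; ring.
Qed.

(* Krawtchouk generating function on R: summing over the components of a
   turns the sum into the product of eight copies of kraw_Z4. *)
Lemma kraw_R (b : R) :
  \sum_(a : R) (chi (cdot b a))%:P * 'X^(leeR a) =
  (1 + 'X) ^+ (16 - leeR b) * (1 - 'X : {poly algC}) ^+ (leeR b).
Proof.
pose F (v : R) : {poly algC} :=
  \prod_(P : {set 'I_3}) ((chi (rcomp b P * v P))%:P * 'X^(leeZ4 (v P))).
have -> : \sum_(a : R) (chi (cdot b a))%:P * 'X^(leeR a) = \sum_(a : R) F (components a).
  apply: eq_bigr => a _; rewrite /F big_split /= -rmorph_prod -chi_sum prodrXr.
  by rewrite /cdot /leeR; congr (_%:P * 'X^_); [congr chi|]; apply: eq_bigr => P _; rewrite ffunE.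
rewrite -(@reindex_inj _ _ _ _ components xpredT F components_inj) /F.
rewrite -(bigA_distr_bigA (fun P (t : 'Z_4) => (chi (rcomp b P * t))%:P * 'X^(leeZ4 t))) /=.
under eq_bigr => P _ do rewrite kraw_Z4.
rewrite big_split /= !prodrXr; congr (_ ^+ _ * _ ^+ _).
apply/eqP; rewrite -(eqn_add2r (leeR b)) subnK ?leeR_le16 // /leeR -big_split /=.
rewrite (eq_bigr (fun _ => 2%N)) ?sum_nat_const ?card_subsets3 // => P _.
by rewrite subnK // leeZ4_le2.
Qed.

Lemma kraw_coef (b : R) (j : nat) :
  \sum_(a : R) chi (cdot b a) * (leeR a == j)%:R = (Kraw j (leeR b))%:~R.
Proof.
transitivity ((\sum_(a : R) (chi (cdot b a))%:P * 'X^(leeR a))`_j).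
  by rewrite coef_sum; apply: eq_bigr => a _; rewrite coefCM coefXn eq_sym.
rewrite kraw_R /Kraw -coef_map /=; congr (_ `_ j).
by rewrite rmorphM !rmorphXn /= rmorphD rmorphB /= rmorph1 map_polyX.
Qed.

Lemma prod_indicator n (p : 'I_n -> bool) :
  \prod_(i < n) ((p i)%:R : algC) = ([forall i, p i])%:R.
Proof.
case: (boolP [forall i, p i]) => [/forallP p_all | /forallPn[i npi]].
  by rewrite big1 // => i _; rewrite p_all.
by rewrite (bigD1 i) //= (negbTE npi) mul0r.
Qed.

(* The counting identity behind MacWilliams: expand each Krawtchouk number by
   kraw_coef, exchange the sums, and evaluate the inner sum over C by
   dual_char_sum. *)
Lemma macwilliams_count_algC n (C : {set word n}) (g : 'I_n -> nat) :
  linear_code C ->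
  \sum_(x in C) \prod_(i < n) ((Kraw (g i) (leeR (x i)))%:~R : algC)
  = (#|C| * #|[set y in dual C | [forall i, leeR (y i) == g i]]|)%:R.
Proof.
move=> HC; set S := [set y in dual C | _].
under eq_bigr => x _ do under eq_bigr => i _ do rewrite -kraw_coef.
under eq_bigr => x _ do rewrite bigA_distr_bigA /=.
rewrite exchange_big /= natrM mulrC -sumr_const mulr_suml [RHS]big_mkcond /=.
apply: eq_bigr => y _.
under eq_bigr => x _ do rewrite big_split /= prod_indicator -chi_sum.
rewrite -mulr_suml (eq_bigr (fun x => chi (tr (ip x y)))) => [|x _]; last by rewrite tr_ip.
rewrite dual_char_sum // [y \in S]inE.
by case: (y \in dual C); case: [forall i, _]; rewrite /= ?(mulr1, mul1r, mulr0, mul0r).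
Qed.

Lemma macwilliams_count n (C : {set word n}) (g : 'I_n -> nat) :
  linear_code C ->
  (\sum_(x in C) \prod_(i < n) Kraw (g i) (leeR (x i)) : int)
  = (#|C| * #|[set y in dual C | [forall i, leeR (y i) == g i]]|)%:Z.
Proof.
move=> HC; apply: (@intr_inj algC); rewrite rmorph_sum /=.
under eq_bigr => x _ do rewrite rmorph_prod.
exact: macwilliams_count_algC.
Qed.

Definition wt (r : R) : 'I_17 := inord (leeR r).

Lemma wtE r : wt r = leeR r :> nat.
Proof. by rewrite inordK // ltnS leeR_le16. Qed.

Definition profile {n : nat} (c : word n) : {ffun 'I_n -> 'I_17} := [ffun i => wt (c i)].

Lemma profileP n (c : word n) (g : {ffun 'I_n -> 'I_17}) :
  (profile c == g) = [forall i, leeR (c i) == g i].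
Proof.
apply/eqP/forallP => [<- i | eq_g]; first by rewrite ffunE wtE.
by apply/ffunP => i; rewrite ffunE; apply: val_inj; rewrite /= wtE; apply/eqP.
Qed.

Lemma monomial_profile (F : fieldType) (Y : 'I_17 -> F) n (c : word n) :
  \prod_(j < 17) Y j ^+ nj c j = \prod_(i < n) Y (profile c i).
Proof.
rewrite (partition_big (profile c) xpredT) //=; apply: eq_bigr => j _.
rewrite (eq_bigr (fun _ => Y j)) => [|i /eqP <-//]; rewrite prodr_const /nj.
by congr (_ ^+ _); apply: eq_card => i; rewrite !inE -topredE /= ffunE wtE.
Qed.

Lemma SLWE_by_profile (F : fieldType) n (D : {set word n}) (X : 'I_17 -> F) :
  SLWE D X = \sum_(g : {ffun 'I_n -> 'I_17})
    #|[set y in D | [forall i, leeR (y i) == g i]]|%:R * \prod_(i < n) X (g i).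
Proof.
rewrite /SLWE (partition_big (@profile n) xpredT) //=; apply: eq_bigr => g _.
rewrite mulr_natl -sumr_const; apply: eq_big => [y | y /andP[_ /eqP <-]].
  by rewrite !inE profileP.
exact: monomial_profile.
Qed.

Lemma SLWE_Bk_by_profile (F : fieldType) n (C : {set word n}) (X : 'I_17 -> F) :
  SLWE C (Bk X) = \sum_(g : {ffun 'I_n -> 'I_17})
    (\sum_(x in C) \prod_(i < n) Kraw (g i) (leeR (x i)))%:~R * \prod_(i < n) X (g i).
Proof.
rewrite /SLWE; under eq_bigr => x _ do rewrite monomial_profile /Bk bigA_distr_bigA /=.
rewrite exchange_big /=; apply: eq_bigr => g _.
rewrite rmorph_sum mulr_suml; apply: eq_bigr => x _.
by rewrite rmorph_prod -big_split; apply: eq_bigr => i _; rewrite ffunE wtE.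
Qed.

Theorem mainTheorem5 (n : nat) (C : {set word n}) (HC : linear_code C)
  (F : numFieldType) (X : 'I_17 -> F) :
  SLWE (dual C) X = (#|C|%:R)^-1 * SLWE C (Bk X).
Proof.
have C_neq0 : (#|C|%:R : F) != 0.
  by rewrite pnatr_eq0 -lt0n; apply/card_gt0P; exists (wzero n); case: HC.
rewrite SLWE_Bk_by_profile SLWE_by_profile mulr_sumr; apply: eq_bigr => g _.
rewrite (@macwilliams_count n C (fun i => g i) HC) -pmulrn natrM -mulrA.
by rewrite mulKf.
Qed.
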